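(* Let $E/F$ be a quadratic extension of fields of characteristic $0$, $\beta\in\mathrm{GL}_n(E)$ skew-Hermitian, and $\zeta\in\mathrm{GL}_n(E)$ normal with respect to $\beta$ such that $\beta^{-1}\zeta^*\beta\zeta$ is regular semisimple. Then $T_\zeta=\{(g,h)\in\mathrm{U}_n^\beta(F)\times\mathrm{U}_n^\beta(F):g^{-1}\zeta h=\zeta\}$ is contained in the diagonal $\{(h,h):h\in\mathrm{U}_n^\beta(F)\}$; thus $T_\zeta$ identifies with the centralizer of $\zeta$ in $\mathrm{U}_n^\beta(F)$.
   Context: $g^*={}^t\bar g$ where $\bar{\ }$ is the nontrivial automorphism of $E/F$; $\beta$ skew-Hermitian means $\beta^*=-\beta$; $\mathrm{U}_n^\beta(F)=\{h\in\mathrm{GL}_n(E):h^*\beta h=\beta\}$. $\zeta$ is normal with respect to $\beta$ if $\zeta$ commutes with $\beta^{-1}\zeta^*\beta\zeta$. *)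

From HB Require Import structures.
From mathcomp Require Import all_boot all_order all_algebra all_field.
Set Implicit Arguments. Unset Strict Implicit. Unset Printing Implicit Defensive.
Import GRing.Theory.
Local Open Scope ring_scope.

(* The quadratic extension E/F is modelled by the field E together with its
   nontrivial involutive automorphism sigma (the "bar" map); F is the fixed
   field of sigma. *)
Definition quad_involution (E : fieldType) (sigma : {rmorphism E -> E}) : Prop :=
  (forall x, sigma (sigma x) = x) /\ (exists x, sigma x != x).

Definition in_base (E : fieldType) (sigma : {rmorphism E -> E}) (x : E) : bool :=
  sigma x == x.

Definition cstar (E : fieldType) (sigma : {rmorphism E -> E}) (n : nat)
  (g : 'M[E]_n) : 'M[E]_n := (map_mx sigma g)^T.

Definition skew_hermitian (E : fieldType) (sigma : {rmorphism E -> E}) (n : nat)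
  (b : 'M[E]_n) : Prop := cstar sigma b = - b.

Definition unitary_group (E : fieldType) (sigma : {rmorphism E -> E}) (n : nat)
  (b : 'M[E]_n) (h : 'M[E]_n) : Prop :=
  h \in unitmx /\ cstar sigma h *m b *m h = b.

Definition normal_wrt (E : fieldType) (sigma : {rmorphism E -> E}) (n : nat)
  (b z : 'M[E]_n) : Prop :=
  let w := invmx b *m cstar sigma z *m b *m z in z *m w = w *m z.

(* regular semisimple in GL_n(E): invertible with separable characteristic
   polynomial (n distinct eigenvalues over an algebraic closure) *)
Definition regular_semisimple (E : fieldType) (n : nat) (A : 'M[E]_n) : Prop :=
  A \in unitmx /\ separable_poly (char_poly A).

Definition T_zeta (E : fieldType) (sigma : {rmorphism E -> E}) (n : nat)
  (b z : 'M[E]_n) (gh : 'M[E]_n * 'M[E]_n) : Prop :=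
  unitary_group sigma b gh.1 /\ unitary_group sigma b gh.2 /\
  invmx gh.1 *m z *m gh.2 = z.

From HB Require Import structures.
From mathcomp Require Import all_boot all_order all_algebra all_field.
Import GRing.Theory.
Local Open Scope ring_scope.
Set Implicit Arguments. Unset Strict Implicit. Unset Printing Implicit Defensive.

(* Put w := beta^-1 zeta^* beta zeta and let (g, h) be in T_zeta,
   i.e. zeta h = g zeta with g, h unitary for beta.  Transporting the unitarity
   of g through zeta shows that h preserves the form S := zeta^* beta zeta,
   i.e. h^* S h = S, and hence h commutes with w = beta^-1 S.  Since w has a
   separable characteristic polynomial, every matrix commuting with w is a
   polynomial in w; as zeta is normal it commutes with w, so zeta commutes with
   h and g zeta = zeta h = h zeta forces g = h.

   The only non-formal ingredient is the centralizer statement.  We prove it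
   by a first-order perturbation argument: for commuting A and B, applying
   Cayley-Hamilton to the pencil A + X B over E[X] and reading off the
   coefficient of X shows that chi_A'(A) B is a polynomial in A; separability
   makes chi_A'(A) invertible with a polynomial inverse. *)

Definition coef_mx (E : fieldType) (k n : nat) (X : 'M[{poly E}]_n) : 'M[E]_n :=
  map_mx (coefp k) X.

Section FirstOrderCoefficients.
Variables (E : fieldType) (n : nat).
Implicit Types X Y : 'M[{poly E}]_n.

Lemma coef_mx0_mul X Y : coef_mx 0 (X *m Y) = coef_mx 0 X *m coef_mx 0 Y.
Proof.
apply/matrixP => i j; rewrite !mxE /= coef_sum; apply: eq_bigr => k _.
by rewrite !mxE coefM big_ord1.
Qed.

Lemma coef_mx1_mul X Y :
  coef_mx 1 (X *m Y) = coef_mx 0 X *m coef_mx 1 Y + coef_mx 1 X *m coef_mx 0 Y.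
Proof.
apply/matrixP => i j; rewrite !mxE /= coef_sum -big_split; apply: eq_bigr => k _.
by rewrite !mxE coefM big_ord_recr big_ord1 /= addrC.
Qed.

Lemma coef_mx1_scale (f : {poly E}) X :
  coef_mx 1 (f *: X) = f`_0 *: coef_mx 1 X + f`_1 *: coef_mx 0 X.
Proof.
by apply/matrixP => i j; rewrite !mxE /= coefM big_ord_recr big_ord1 /= addrC.
Qed.

Lemma coef_mx_scalar k (c : {poly E}) : coef_mx k (c%:M : 'M_n) = (c`_k)%:M.
Proof. by apply/matrixP => i j; rewrite !mxE /= coefMn. Qed.

End FirstOrderCoefficients.

Lemma horner_mx_sum (R : comNzRingType) n (A : 'M[R]_n.+1) (q : {poly R}) m :
  (size q <= m)%N -> horner_mx A q = \sum_(i < m) q`_i *: A ^+ i.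
Proof.
move=> size_q.
have q_trunc : q = \poly_(i < m) q`_i.
  apply/polyP => i; rewrite coef_poly; case: ltnP => // le_m_i.
  by rewrite nth_default // (leq_trans size_q le_m_i).
rewrite {1}q_trunc poly_def rmorph_sum; apply: eq_bigr => i _.
by rewrite -mul_polyC rmorphM /= horner_mx_C rmorphXn /= horner_mx_X -mul_scalar_mx.
Qed.

Section Pencil.
Variables (E : fieldType) (n : nat) (A B : 'M[E]_n.+1).
Hypothesis AB : A *m B = B *m A.

Definition pencil : 'M[{poly E}]_n.+1 := map_mx polyC A + 'X *: map_mx polyC B.

Lemma coef_mx0_pencil : coef_mx 0 pencil = A.
Proof. by apply/matrixP => i j; rewrite !mxE /= coefD coefC coefXM addr0. Qed.

Lemma coef_mx1_pencil : coef_mx 1 pencil = B.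
Proof. by apply/matrixP => i j; rewrite !mxE /= coefD coefC coefXM add0r coefC. Qed.

Lemma coef_mx0_pencil_exp k : coef_mx 0 (pencil ^+ k) = A ^+ k.
Proof.
elim: k => [|k IHk]; first by rewrite !expr0 (coef_mx_scalar _ 0 1) coef1.
by rewrite !exprSr -!mulmxE coef_mx0_mul IHk coef_mx0_pencil.
Qed.

(* Since A and B commute, d/dX (A + X B)^k at X = 0 is k A^(k-1) B. *)
Lemma coef_mx1_pencil_exp k : coef_mx 1 (pencil ^+ k) = (A ^+ k.-1 *m B) *+ k.
Proof.
elim: k => [|k IHk].
  rewrite expr0 (coef_mx_scalar _ 1 1) coef1 mulr0n.
  by apply/matrixP => i j; rewrite !mxE mul0rn.
rewrite exprSr -mulmxE coef_mx1_mul coef_mx0_pencil_exp IHk.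
rewrite coef_mx1_pencil coef_mx0_pencil.
case: k {IHk} => [|k]; first by rewrite !expr0 mul0mx addr0.
have BA : B * A = A * B by rewrite -!mulmxE AB.
by rewrite /= !mulmxE mulrnAl -mulrA BA mulrA -exprSr [in RHS]mulrS.
Qed.

Lemma coef0_char_poly_pencil i : ((char_poly pencil)`_i)`_0 = (char_poly A)`_i.
Proof.
have -> : A = map_mx (horner_eval 0) pencil.
  rewrite -[LHS]coef_mx0_pencil; apply/matrixP => r s.
  by rewrite !mxE /= horner_evalE horner_coef0.
by rewrite -map_char_poly coef_map /= horner_evalE horner_coef0.
Qed.

(* Coefficient of X in Cayley-Hamilton for the pencil: chi_A'(A) B is a
   polynomial in A. *)
Lemma char_poly_deriv_mul :
  exists r, horner_mx A (char_poly A)^`() *m B = horner_mx A r.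
Proof.
set P := char_poly pencil.
have size_P : size P = n.+2 := size_char_poly pencil.
have CH := Cayley_Hamilton pencil.
rewrite (@horner_mx_sum _ _ _ _ n.+2) ?size_P // in CH.
have /eqP := congr1 (@coef_mx E 1 n.+1) CH.
rewrite /coef_mx map_mx_sum map_mx0 -/(coef_mx _ _).
under eq_bigr do rewrite -/(coef_mx 1 _) coef_mx1_scale coef_mx0_pencil_exp
  coef_mx1_pencil_exp coef0_char_poly_pencil.
rewrite big_split /= addr_eq0 => /eqP first_order.
exists (- \poly_(i < n.+2) (P`_i)`_1).
rewrite rmorphN /= (@horner_mx_sum _ _ _ _ n.+2) ?size_poly //.
rewrite (@horner_mx_sum _ _ _ _ n.+1); last first.
  by rewrite (leq_trans (size_poly _ _)) // size_char_poly.
under [in RHS]eq_bigr do rewrite coef_poly ltn_ord.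
rewrite -first_order [RHS]big_ord_recl /= mulr0n scaler0 add0r mulmx_suml.
by apply: eq_bigr => i _; rewrite coef_deriv -scalemxAl -scalerMnl -scalerMnr.
Qed.

End Pencil.

Lemma comm_separable_horner (E : fieldType) n (A B : 'M[E]_n.+1) :
  A *m B = B *m A -> separable_poly (char_poly A) -> exists r, B = horner_mx A r.
Proof.
move=> AB; rewrite unlock => /Bezout_eq1_coprimepP [[u v] /= Bezout_uv].
have [r deriv_B] := char_poly_deriv_mul AB.
have deriv_inv : horner_mx A v *m horner_mx A (char_poly A)^`() = 1%:M.
  have := congr1 (horner_mx A) Bezout_uv.
  rewrite rmorphD !rmorphM /= Cayley_Hamilton mulr0 add0r rmorph1 => inv_eq.
  by rewrite mulmxE inv_eq idmxE.
by exists (v * r); rewrite rmorphM /= -deriv_B -mulmxE mulmxA deriv_inv mul1mx.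
Qed.

Section UnitaryAlgebra.
Variables (E : fieldType) (sigma : {rmorphism E -> E}) (n : nat).
Local Notation star := (cstar sigma).

Lemma cstarM (X Y : 'M[E]_n) : star (X *m Y) = star Y *m star X.
Proof. by rewrite /cstar map_mxM trmx_mul. Qed.

Lemma unitary_inv_form (b h : 'M[E]_n) :
  b \in unitmx -> h \in unitmx -> star h *m b *m h = b ->
  h *m invmx b *m star h = invmx b.
Proof.
move=> b_unit h_unit h_unitary.
have hstar_b : star h *m b = b *m invmx h by rewrite -[in RHS]h_unitary mulmxK.
have hstar : invmx b *m star h *m b = invmx h.
  by rewrite -mulmxA hstar_b mulmxA mulVmx // mul1mx.
have inv_prod : h *m invmx b *m star h *m b = 1%:M.
  by rewrite -!mulmxA [invmx b *m _]mulmxA hstar mulmxV.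
by rewrite -[LHS]mulmx1 -(mulmxV b_unit) mulmxA inv_prod mul1mx.
Qed.

Lemma unitary_transport (b zeta g h : 'M[E]_n) :
  zeta *m h = g *m zeta -> star g *m b *m g = b ->
  star h *m (star zeta *m b *m zeta) *m h = star zeta *m b *m zeta.
Proof.
move=> intertwine g_unitary.
have := congr1 (fun M => star M *m b *m M) intertwine; rewrite /= !cstarM.
rewrite -!mulmxA [b *m (g *m _)]mulmxA [star g *m (b *m g *m _)]mulmxA.
by rewrite [star g *m (b *m g)]mulmxA g_unitary !mulmxA.
Qed.

Lemma unitary_transport_comm (b zeta g h : 'M[E]_n) :
  b \in unitmx -> h \in unitmx -> star h *m b *m h = b ->
  zeta *m h = g *m zeta -> star g *m b *m g = b ->
  let w := invmx b *m star zeta *m b *m zeta in w *m h = h *m w.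
Proof.
move=> b_unit h_unit h_unitary intertwine g_unitary w.
have wE : w = invmx b *m (star zeta *m b *m zeta) by rewrite /w !mulmxA.
rewrite wE [RHS]mulmxA -{2}(unitary_transport intertwine g_unitary) !mulmxA.
by rewrite (unitary_inv_form b_unit h_unit h_unitary).
Qed.

End UnitaryAlgebra.

(* If zeta commutes with a matrix w of separable characteristic polynomial,
   then an intertwining relation zeta h = g zeta with h in the centralizer
   of w forces g = h: h is a polynomial in w, hence commutes with zeta. *)
Lemma intertwined_eq (E : fieldType) n (w zeta g h : 'M[E]_n) :
  zeta \in unitmx -> separable_poly (char_poly w) ->
  zeta *m w = w *m zeta -> w *m h = h *m w -> zeta *m h = g *m zeta -> g = h.
Proof.
case: n => [|n] in w zeta g h * => zeta_unit w_sep zeta_w w_h intertwine.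
  by apply/matrixP => [[]].
have [r h_poly] := comm_separable_horner w_h w_sep.
have zeta_h : comm_mx zeta h by rewrite h_poly; apply: comm_mx_horner.
have : g *m zeta = h *m zeta by rewrite -intertwine zeta_h.
by move/(congr1 (mulmx^~ (invmx zeta))); rewrite !mulmxK.
Qed.

Theorem mainTheorem10 (E : fieldType) (sigma : {rmorphism E -> E}) (n : nat)
  (beta zeta : 'M[E]_n) :
  [pchar E] =i pred0 ->
  quad_involution sigma ->
  beta \in unitmx -> skew_hermitian sigma beta ->
  zeta \in unitmx -> normal_wrt sigma beta zeta ->
  regular_semisimple (invmx beta *m cstar sigma zeta *m beta *m zeta) ->
  forall g h : 'M[E]_n, T_zeta sigma beta zeta (g, h) ->
    g = h /\ unitary_group sigma beta h.
Proof.
move=> _ _ beta_unit _ zeta_unit zeta_normal [_ w_sep] g h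
  [[g_unit g_unitary] [[h_unit h_unitary] /= T_eq]].
split; last by [].
have intertwine : zeta *m h = g *m zeta.
  by rewrite -[in RHS]T_eq !mulmxA mulmxV // mul1mx.
have w_h := unitary_transport_comm beta_unit h_unit h_unitary intertwine g_unitary.
exact: intertwined_eq zeta_unit w_sep zeta_normal w_h intertwine.
Qed.
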